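(* Let $G$ be a group with finite generating set $S$, Cayley graph $\mathcal G$ with word metric $d$, and $0<\lambda<1$. Let $\xi\in\partial_\lambda G$, let $\gamma$ be a geodesic from $1$ to $\xi$, let $v$ be a vertex on $\gamma$, and set $r=\lambda^{d(1,v)}$. Then: (1) for every $R>0$ there is $C_1=C_1(R,\lambda)>0$ with $\Pi_1(v,R)\subset B_{\rho_\lambda}(\xi,C_1r)$; (2) for every $\kappa>0$ there are $R=R(\kappa)>0$ and $C_2=C_2(\kappa)>0$ such that if $\rho^v_\lambda(1,\xi)\ge\kappa$ then $B_{\rho_\lambda}(\xi,C_2r)\subset\Pi_1(v,R)$.
   Context: Floyd metric: for a basepoint $o\in G$, an edge $e$ of $\mathcal G$ has length $\lambda^{d(o,e)}$ and $\rho^o_\lambda$ is the induced length metric; $\rho_\lambda=\rho^1_\lambda$. $\partial_\lambda G=\overline G_\lambda\setminus G$, where $\overline G_\lambda$ is the Cauchy completion of $(G,\rho_\lambda)$; any two points of $G\cup\partial_\lambda G$ are joined by a (finite, semi-infinite or bi-infinite) geodesic of $\mathcal G$. Shadow: $\Pi_x(y,R)=\{\eta\in\partial_\lambda G:\text{ some geodesic }[x,\eta]\text{ meets }B(y,R)\}$. $B_{\rho_\lambda}(\xi,t)$ is the $\rho_\lambda$-ball in $\partial_\lambda G$. *)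

From HB Require Import structures.
From mathcomp Require Import all_boot all_order all_algebra.
From mathcomp Require Import all_classical all_reals all_analysis.
Set Implicit Arguments.
Unset Strict Implicit.
Unset Printing Implicit Defensive.
Import Order.TTheory GRing.Theory Num.Theory numFieldNormedType.Exports.
Local Open Scope classical_set_scope.
Local Open Scope ring_scope.

Section Floyd.
Variables (G : groupType) (S : seq G).

Definition generates : Prop :=
  forall g : G, exists w : seq G,
    all (fun s => (s \in S) || ((s^-1)%g \in S)) w /\
    g = foldr (fun a b => (a * b)%g) 1%g w.

Definition adj (x y : G) : Prop :=
  exists2 s, s \in S & (y = x * s)%g \/ (x = y * s)%g.

(* a walk x = p_0, p_1, ..., p_n in the Cayley graph, given by x and
   the list [p_1; ...; p_n] *)
Fixpoint walk (x : G) (p : seq G) : Prop :=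
  if p is y :: q then adj x y /\ walk y q else True.

Definition walk_from_to (x y : G) (p : seq G) : Prop :=
  walk x p /\ last x p = y.

Definition wdist (x y : G) : nat :=
  xget 0%N [set n | (exists p, walk_from_to x y p /\ size p = n) /\
                    forall p, walk_from_to x y p -> (n <= size p)%N].

Variables (R : realType) (lambda : R).

(* Floyd length of the edge {a,b} with basepoint o:
   lambda ^ d(o,e), where d(o,e) = min(d(o,a), d(o,b)). *)
Definition edge_len (o a b : G) : R :=
  lambda ^+ minn (wdist o a) (wdist o b).

Fixpoint walk_len (o x : G) (p : seq G) : R :=
  if p is y :: q then edge_len o x y + walk_len o y q else 0.

Definition rho (o x y : G) : R :=
  inf [set walk_len o x p | p in [set p | walk_from_to x y p]].

Definition rho1 (x y : G) : R := rho 1%g x y.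

Definition rho_cauchy (u : nat -> G) : Prop :=
  forall e : R, 0 < e -> exists N : nat, forall m n : nat,
    (N <= m)%N -> (N <= n)%N -> rho1 (u m) (u n) < e.

(* two sequences are equivalent (same point of the Cauchy completion) *)
Definition rho_equiv (u w : nat -> G) : Prop :=
  rho1 (u n) (w n) @[n --> \oo] --> 0.

(* Points of the boundary = points of the Cauchy completion not in G:
   represented by Cauchy sequences not converging to a point of G. *)
Definition is_boundary (u : nat -> G) : Prop :=
  rho_cauchy u /\ forall g : G, ~ rho_equiv u (fun _ => g).

Definition rho_bd (u w : nat -> G) : R := limn (fun n => rho1 (u n) (w n)).

Definition rho_pt_bd (o x : G) (u : nat -> G) : R :=
  limn (fun n => rho o x (u n)).

Definition geod_ray (g : nat -> G) : Prop :=
  forall i j : nat, wdist (g i) (g j) = `|(i%:Z - j%:Z)%R|%N.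

Definition geodesic_to (x : G) (xi : nat -> G) (g : nat -> G) : Prop :=
  g 0%N = x /\ geod_ray g /\ rho_equiv g xi.

Definition shadow (x y : G) (Rad : R) : set (nat -> G) :=
  [set eta | is_boundary eta /\
     exists g, geodesic_to x eta g /\ exists n, (wdist (g n) y)%:R <= Rad].

Definition bd_ball (xi : nat -> G) (t : R) : set (nat -> G) :=
  [set eta | is_boundary eta /\ rho_bd xi eta < t].

End Floyd.

From HB Require Import structures.
From mathcomp Require Import all_boot all_order all_algebra.
From mathcomp Require Import all_classical all_reals all_analysis.
From mathcomp Require Import zify ring lra.

(* Along a geodesic ray from 1 the Floyd length of the part after time i is at
   most lambda^i / (1 - lambda).  Hence if a geodesic alpha from 1 to eta passes
   within R of v = gamma(k), chaining xi ~ gamma(j), gamma(k), alpha(n), alpha(j)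
   ~ eta bounds rho(xi, eta) by a multiple of lambda^k.
   Conversely, Karlsson's lemma says that a geodesic from 1 staying at word
   distance >= M from v has rho^v-length at most mu^M * 2 / (1 - mu), where
   mu = sqrt lambda.  If rho(xi, eta) < kappa lambda^k / 4 and
   rho^v(1, xi) >= kappa, then rho^v(1, eta_j) > kappa / 2 for large j, since
   rho^v <= lambda^-k rho; so for M large every geodesic from 1 to eta_j
   passes within M of v.  Balls being finite, a Koenig-type diagonal argument
   extracts from these geodesics a geodesic ray from 1 to eta that still
   passes within M of v. *)

Set Implicit Arguments.
Unset Strict Implicit.
Unset Printing Implicit Defensive.
Import Order.TTheory GRing.Theory Num.Theory numFieldNormedType.Exports.
Local Open Scope classical_set_scope.
Local Open Scope ring_scope.

Section RealSequences.
Variable R : realType.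
Implicit Types (a : nat -> R) (P : nat -> Prop).

Lemma near_ooP P : (\forall n \near \oo, P n) <-> exists N, forall n, (N <= n)%N -> P n.
Proof.
split; first by case=> N _ HN; exists N => n hn; apply: HN.
by case=> N HN; exists N => // n /= hn; apply: HN.
Qed.

Lemma cauchy_seq_cvg a :
  (forall e, 0 < e -> exists N, forall m n, (N <= m)%N -> (N <= n)%N -> `|a m - a n| < e) ->
  cvgn a.
Proof.
move=> H; apply: cauchy_cvg; apply: cauchy_exP => e e0.
have [N HN] := H e e0; exists (a N); apply/near_ooP; exists N => n hn.
by rewrite /ball /= HN.
Qed.

Lemma limn_le_eventually a b : cvgn a ->
  (exists N, forall n, (N <= n)%N -> a n <= b) -> limn a <= b.
Proof. by move=> ha /near_ooP hb; apply: limr_le. Qed.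

Lemma limn_lt_eventually a c : cvgn a -> limn a < c ->
  exists N, forall n, (N <= n)%N -> a n < c.
Proof.
move=> ha hc; apply/near_ooP.
have := proj1 (cvgrPdist_lt _ _) ha (c - limn a); rewrite subr_gt0 => /(_ _ hc).
apply: filterS => n hn.
have : a n - limn a < c - limn a by apply: le_lt_trans (ler_norm _) _; rewrite distrC.
by rewrite ltrD2r.
Qed.

Lemma limn_gt_eventually a c : cvgn a -> c < limn a ->
  exists N, forall n, (N <= n)%N -> c < a n.
Proof.
move=> ha hc; apply/near_ooP.
have := proj1 (cvgrPdist_lt _ _) ha (limn a - c); rewrite subr_gt0 => /(_ _ hc).
apply: filterS => n hn.
have : limn a - a n < limn a - c by apply: le_lt_trans (ler_norm _) _.
by rewrite ltrD2l ltrN2.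
Qed.

Lemma cvgn0P a : a @ \oo --> 0 <->
  forall e, 0 < e -> exists N, forall n, (N <= n)%N -> `|a n| < e.
Proof.
rewrite (@cvgrPdist_lt _ _ _ _ eventually_filter a 0); split=> h e /h.
  by move/near_ooP => [N HN]; exists N => n /HN; rewrite sub0r normrN.
by move=> [N HN]; apply/near_ooP; exists N => n /HN; rewrite sub0r normrN.
Qed.

Lemma exprn_lt_eventually (z e : R) : 0 <= z -> z < 1 -> 0 < e ->
  exists N, forall n, (N <= n)%N -> z ^+ n < e.
Proof.
move=> z0 z1 e0; have hz : `|z| < 1 by rewrite ger0_norm.
have [N HN] := proj1 (cvgn0P _) (cvg_expr hz) e e0.
by exists N => n /HN; rewrite ger0_norm // exprn_ge0.
Qed.

End RealSequences.

Section Floyd.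
Variables (G : groupType) (S : seq G) (R : realType) (lambda : R).
Hypothesis S_gen : generates S.
Hypotheses (lambda_gt0 : 0 < lambda) (lambda_lt1 : lambda < 1).

Local Notation adj := (adj S).
Local Notation walk := (walk S).
Local Notation wft := (walk_from_to S).
Local Notation d := (wdist S).
Local Notation wlen := (walk_len S lambda).
Local Notation elen := (edge_len S lambda).
Local Notation rho := (rho S lambda).

Definition geodesic_walk x y p := wft x y p /\ size p = d x y.

Lemma adj_sym x y : adj x y -> adj y x.
Proof. by case=> s hs [] ->; exists s => //; [right|left]. Qed.

Lemma walk_cat x p q : walk x (p ++ q) <-> walk x p /\ walk (last x p) q.
Proof. elim: p x => [|y p IH] x /=; first by tauto. rewrite IH; tauto. Qed.

Lemma walk_rcons x p y : walk x (rcons p y) <-> walk x p /\ adj (last x p) y.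
Proof. rewrite -cats1 walk_cat /=; tauto. Qed.

Lemma walk_from_to_cat x y z p q : wft x y p -> wft y z q -> wft x z (p ++ q).
Proof.
by move=> [hp <-] [hq <-]; split; [apply/walk_cat | rewrite last_cat].
Qed.

Lemma walk_nth_adj (x0 x : G) p t : walk x p -> (t < size p)%N ->
  adj (nth x0 (x :: p) t) (nth x0 (x :: p) t.+1).
Proof.
elim: p x t => [|y p IH] x t //= [hxy hp].
by case: t => [|t] ht //=; apply: IH.
Qed.

Lemma exists_walk x y : exists p, wft x y p.
Proof.
have [w [hw e]] := S_gen (x^-1 * y)%g.
suff walk_word : forall ws x, all (fun s => (s \in S) || ((s^-1)%g \in S)) ws ->
   exists p, walk x p /\ last x p = (x * foldr (fun a b => (a * b)%g) 1%g ws)%g.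
  by have [p [h1 h2]] := walk_word w x hw; exists p; split => //; rewrite h2 -e mulVKg.
elim=> [|a ws IH] z /=; first by move=> _; exists [::]; rewrite mulg1.
move=> /andP [ha /(IH (z * a)%g) [p [h1 h2]]]; exists ((z * a)%g :: p) => /=; split.
  split => //; case/orP: ha => ha; first by exists a => //; left.
  by exists (a^-1)%g => //; right; rewrite mulgK.
by rewrite h2 mulgA.
Qed.

Lemma wdist_spec x y : (exists p, geodesic_walk x y p) /\
  forall p, wft x y p -> (d x y <= size p)%N.
Proof.
rewrite /geodesic_walk /wdist; set P := [set n | _].
suff : P (xget 0%N P) by case.
apply: xgetPex.
have hex : exists n, `[< exists p, wft x y p /\ size p = n >].
  by have [p hp] := exists_walk x y; exists (size p); apply/asboolP; exists p.
exists (ex_minn hex); split.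
  by case: ex_minnP => m /asboolP [p hp] _; exists p.
move=> p hp; case: ex_minnP => m _; apply; apply/asboolP; by exists p.
Qed.

Lemma wdist_le_size x y p : wft x y p -> (d x y <= size p)%N.
Proof. exact: (proj2 (wdist_spec x y)). Qed.

Lemma exists_geodesic_walk x y : exists p, geodesic_walk x y p.
Proof. exact: (proj1 (wdist_spec x y)). Qed.

Lemma wdistxx x : d x x = 0%N.
Proof. by apply/eqP; rewrite -leqn0; apply: (@wdist_le_size x x [::]). Qed.

Lemma wdist_eq0 x y : d x y = 0%N -> x = y.
Proof.
move=> h; have [p [[hp1 hp2] hs]] := exists_geodesic_walk x y.
by move: hs hp2; rewrite h; case: p hp1.
Qed.

Lemma wdist_triangle x y z : (d x z <= d x y + d y z)%N.
Proof.
have [p [hp <-]] := exists_geodesic_walk x y.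
have [q [hq <-]] := exists_geodesic_walk y z.
by rewrite -size_cat; exact: wdist_le_size (walk_from_to_cat hp hq).
Qed.

Lemma walk_len_cat o x p q : wlen o x (p ++ q) = wlen o x p + wlen o (last x p) q.
Proof. by elim: p x => [|y p IH] x /=; rewrite ?add0r // IH addrA. Qed.

Lemma walk_len_rcons o x p y : wlen o x (rcons p y) = wlen o x p + elen o (last x p) y.
Proof. by rewrite -cats1 walk_len_cat /= addr0. Qed.

Lemma edge_lenC o a b : elen o a b = elen o b a.
Proof. by rewrite /edge_len minnC. Qed.

Lemma walk_rev x p : walk x p -> exists q, wft (last x p) x q
  /\ size q = size p /\ forall o, wlen o (last x p) q = wlen o x p.
Proof.
elim: p x => [|y p IH] x /=; first by move=> _; exists [::].
case=> hxy /IH [q [[hq hl] [hs hw]]]; exists (rcons q x); split.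
  split; last by rewrite last_rcons.
  by apply/walk_rcons; split => //; rewrite hl; apply: adj_sym.
split; first by rewrite size_rcons hs.
by move=> o; rewrite walk_len_rcons hw hl edge_lenC addrC.
Qed.

Lemma wdistC x y : d x y = d y x.
Proof.
suff H : forall x y, (d y x <= d x y)%N by apply/eqP; rewrite eqn_leq !H.
move=> a b; have [p [[hp <-] <-]] := exists_geodesic_walk a b.
have [q [hq [<- _]]] := walk_rev hp.
exact: wdist_le_size.
Qed.

Lemma wdist_adj_le1 x y : adj x y -> (d x y <= 1)%N.
Proof. by move=> h; apply: (@wdist_le_size x y [:: y]). Qed.

Lemma wdist1_adj x y : d x y = 1%N -> adj x y.
Proof.
have [p [[hp1 hp2] hs]] := exists_geodesic_walk x y; move=> e; rewrite e in hs.
by case: p hp1 hp2 hs => [|z [|]] //= [h _] <-.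
Qed.

Lemma lambdaX_ge0 n : 0 <= lambda ^+ n.
Proof. by rewrite exprn_ge0 // ltW. Qed.

Lemma lambdaX_gt0 n : 0 < lambda ^+ n.
Proof. by rewrite exprn_gt0. Qed.

Lemma lambdaX_le m n : (n <= m)%N -> lambda ^+ m <= lambda ^+ n.
Proof. by move=> h; apply: ler_wiXn2l => //; rewrite ltW. Qed.

Lemma lambdaXB_le k M : lambda ^+ (k - M) <= lambda ^+ k / lambda ^+ M.
Proof. by rewrite ler_pdivlMr ?lambdaX_gt0 // -exprD; apply: lambdaX_le; lia. Qed.

Lemma walk_len_ge0 o x p : 0 <= wlen o x p.
Proof.
by elim: p x => [|y p IH] x //=; rewrite addr_ge0 // /edge_len lambdaX_ge0.
Qed.

Lemma rho_le_walk_len o x y p : wft x y p -> rho o x y <= wlen o x p.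
Proof.
move=> hp; apply: ge_inf; last by exists p.
by exists 0 => _ [q _ <-]; apply: walk_len_ge0.
Qed.

Lemma rho_ge o x y c : (forall p, wft x y p -> c <= wlen o x p) -> c <= rho o x y.
Proof.
move=> H; apply: lb_le_inf.
  by have [p hp] := exists_walk x y; exists (wlen o x p), p.
by move=> _ [q hq <-]; apply: H.
Qed.

Lemma rho_ge0 o x y : 0 <= rho o x y.
Proof. by apply: rho_ge => p _; apply: walk_len_ge0. Qed.

Lemma rhoxx o x : rho o x x = 0.
Proof.
apply/eqP; rewrite eq_le rho_ge0 andbT.
exact: (@rho_le_walk_len o x x [::]).
Qed.

Lemma rho_triangle o x y z : rho o x z <= rho o x y + rho o y z.
Proof.
rewrite -lerBlDl; apply: rho_ge => q hq.
rewrite lerBlDl -lerBlDr; apply: rho_ge => p hp.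
rewrite lerBlDr; apply: le_trans (rho_le_walk_len o (walk_from_to_cat hp hq)) _.
by rewrite walk_len_cat (proj2 hp).
Qed.

Lemma rhoC o x y : rho o x y = rho o y x.
Proof.
suff H : forall a b, rho o b a <= rho o a b by apply/eqP; rewrite eq_le !H.
move=> a b; apply: rho_ge => p [hp <-].
have [q [hq [_ <-]]] := walk_rev hp.
exact: rho_le_walk_len.
Qed.

Lemma rho_lipschitz o x a b : `|rho o x a - rho o x b| <= rho o a b.
Proof.
have h1 := rho_triangle o x a b; have h2 := rho_triangle o x b a.
rewrite (rhoC o b a) in h2.
rewrite ler_norml; apply/andP; split; lra.
Qed.

Lemma rho_le_edge_len o a b : adj a b -> rho o a b <= elen o a b.
Proof.
move=> h; apply: le_trans (@rho_le_walk_len o a b [:: b] _) _; first by split.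
by rewrite /= addr0.
Qed.

Lemma walk_len_basepoint o o' x p : lambda ^+ d o o' * wlen o' x p <= wlen o x p.
Proof.
elim: p x => [|y p IH] x /=; first by rewrite mulr0.
rewrite mulrDr lerD // /edge_len -exprD; apply: lambdaX_le.
have h1 := wdist_triangle o o' x; have h2 := wdist_triangle o o' y.
lia.
Qed.

Lemma rho_basepoint o o' x y : lambda ^+ d o o' * rho o' x y <= rho o x y.
Proof.
apply: rho_ge => // p hp; apply: le_trans (walk_len_basepoint o o' x p).
by rewrite ler_wpM2l ?lambdaX_ge0 // rho_le_walk_len.
Qed.

Lemma rho_le_rho1 o x y : rho o x y <= rho1 S lambda x y / lambda ^+ d 1%g o.
Proof. by rewrite ler_pdivlMr ?lambdaX_gt0 // mulrC rho_basepoint. Qed.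

Lemma walk_len_le_size y p : walk y p ->
  wlen 1%g y p <= (size p)%:R * lambda ^+ (d 1%g y - size p).
Proof.
elim: p y => [|z p IH] y /=; first by rewrite mul0r.
case=> hyz /IH hp; rewrite -add1n natrD mulrDl mul1r.
have hd : (d 1%g y <= d 1%g z + 1)%N.
  by apply: leq_trans (wdist_triangle _ z _) _; rewrite leq_add2l wdistC wdist_adj_le1 // adj_sym.
apply: lerD; first by apply: lambdaX_le; lia.
by apply: le_trans hp _; rewrite ler_wpM2l //; apply: lambdaX_le; lia.
Qed.

Lemma rho1_le_wdist x y : rho 1%g x y <= (d x y)%:R * lambda ^+ (d 1%g x - d x y).
Proof.
have [p [hp <-]] := exists_geodesic_walk x y.
exact: le_trans (rho_le_walk_len _ hp) (walk_len_le_size (proj1 hp)).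
Qed.

Lemma rho1_geodesic_segment (h : nat -> G) L :
  (forall t, (t <= L)%N -> d 1%g (h t) = t) ->
  (forall t, (t < L)%N -> adj (h t) (h t.+1)) ->
  forall i j, (i <= j)%N -> (j <= L)%N -> rho 1%g (h i) (h j) <= lambda ^+ i / (1 - lambda).
Proof.
move=> hd hadj i j hij hjL; rewrite -(subnKC hij).
have hl : 1 - lambda != 0 by rewrite subr_eq0 gt_eqF.
have geometric_sum : forall n, (i + n <= L)%N ->
    rho 1%g (h i) (h (i + n)%N) <= (lambda ^+ i - lambda ^+ (i + n)) / (1 - lambda).
  elim=> [|n IH] hn; first by rewrite addn0 subrr mul0r rhoxx.
  apply: le_trans (rho_triangle _ _ (h (i + n)%N) _) _.
  have hedge : rho 1%g (h (i + n)%N) (h (i + n.+1)%N) <= lambda ^+ (i + n).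
    rewrite addnS; apply: le_trans (rho_le_edge_len _ (hadj _ _)) _; first by lia.
    by rewrite /edge_len !hd; try lia; rewrite (minn_idPl _) ?leqnSn.
  apply: le_trans (lerD (IH _) hedge) _; first by lia.
  by rewrite addnS exprS le_eqVlt; apply/orP; left; apply/eqP; field.
apply: le_trans (geometric_sum _ _) _; first by rewrite subnKC.
by rewrite ler_pM2r ?invr_gt0 ?subr_gt0 // lerBlDr lerDl lambdaX_ge0.
Qed.

Lemma geod_ray_wdist1 (g : nat -> G) : g 0%N = 1%g -> geod_ray S g -> forall t, d 1%g (g t) = t.
Proof. by move=> h0 hr t; rewrite -h0 hr; lia. Qed.

Lemma geod_ray_adj (g : nat -> G) : geod_ray S g -> forall t, adj (g t) (g t.+1).
Proof. by move=> hr t; apply: wdist1_adj; rewrite hr; lia. Qed.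

Lemma rho1_geod_ray_tail (g : nat -> G) : g 0%N = 1%g -> geod_ray S g ->
  forall i j, (i <= j)%N -> rho 1%g (g i) (g j) <= lambda ^+ i / (1 - lambda).
Proof.
move=> h0 hr i j hij; apply: (@rho1_geodesic_segment g j) => // t _.
  exact: geod_ray_wdist1.
exact: geod_ray_adj.
Qed.

Lemma cvgn_rho_pt o x u : rho_cauchy S lambda u -> cvgn (fun n => rho o x (u n)).
Proof.
move=> hu; apply: cauchy_seq_cvg => e e0.
have [N HN] := hu (e * lambda ^+ d 1%g o) (mulr_gt0 e0 (lambdaX_gt0 _)).
exists N => m n hm hn; apply: le_lt_trans (rho_lipschitz _ _ _ _) _.
by apply: le_lt_trans (rho_le_rho1 _ _ _) _; rewrite ltr_pdivrMr ?lambdaX_gt0 // HN.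
Qed.

Lemma cvgn_rho1 u w : rho_cauchy S lambda u -> rho_cauchy S lambda w ->
  cvgn (fun n => rho 1%g (u n) (w n)).
Proof.
move=> hu hw; apply: cauchy_seq_cvg => e e0.
have e2 : 0 < e / 2 by rewrite divr_gt0.
have [N1 H1] := hu _ e2; have [N2 H2] := hw _ e2.
exists (maxn N1 N2) => m n hm hn.
have h1 := H1 m n ltac:(lia) ltac:(lia); have h2 := H2 m n ltac:(lia) ltac:(lia).
rewrite /rho1 in h1 h2.
have t1 := rho_triangle 1%g (u m) (u n) (w m); have t2 := rho_triangle 1%g (u n) (w n) (w m).
have t3 := rho_triangle 1%g (u n) (u m) (w n); have t4 := rho_triangle 1%g (u m) (w m) (w n).
rewrite (rhoC _ (w n) (w m)) in t2; rewrite (rhoC _ (u n) (u m)) in t3.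
rewrite ltr_norml; apply/andP; split; lra.
Qed.

Lemma rho_equiv_lt u w : rho_equiv S lambda u w ->
  forall e, 0 < e -> exists N, forall n, (N <= n)%N -> rho 1%g (u n) (w n) < e.
Proof.
move=> /cvgn0P h e /h [N HN]; exists N => n /HN.
by rewrite ger0_norm // rho_ge0.
Qed.

Lemma rho1_geod_rays_near (g a : nat -> G) k n M :
  g 0%N = 1%g -> geod_ray S g -> a 0%N = 1%g -> geod_ray S a -> (d (a n) (g k) <= M)%N ->
  forall j, (k <= j)%N -> (n <= j)%N -> rho 1%g (g j) (a j) <=
    lambda ^+ k * (1 / (1 - lambda) + (M%:R + 1 / (1 - lambda)) / lambda ^+ M).
Proof.
move=> g0 hg a0 ha hM j hkj hnj.
have hl : 0 < 1 - lambda by rewrite subr_gt0.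
have hk : d 1%g (g k) = k := geod_ray_wdist1 g0 hg k.
have hn : (k - M <= n)%N.
  by have := wdist_triangle 1%g (a n) (g k); rewrite hk geod_ray_wdist1 //; lia.
have hkM : lambda ^+ (k - M) <= lambda ^+ k / lambda ^+ M := lambdaXB_le k M.
have t1 : rho 1%g (g j) (g k) <= lambda ^+ k / (1 - lambda).
  by rewrite rhoC; apply: rho1_geod_ray_tail.
have t2 : rho 1%g (g k) (a n) <= M%:R * (lambda ^+ k / lambda ^+ M).
  apply: le_trans (rho1_le_wdist _ _) _; rewrite hk wdistC.
  apply: ler_pM; rewrite ?ler_nat ?lambdaX_ge0 //.
  by apply: le_trans hkM; apply: lambdaX_le; apply: leq_sub2l.
have t3 : rho 1%g (a n) (a j) <= lambda ^+ k / lambda ^+ M / (1 - lambda).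
  apply: le_trans (rho1_geod_ray_tail a0 ha hnj) _.
  by rewrite ler_pM2r ?invr_gt0 //; apply: le_trans hkM; apply: lambdaX_le.
have t4 := rho_triangle 1%g (g j) (g k) (a j).
have t5 := rho_triangle 1%g (g k) (a n) (a j).
have -> : lambda ^+ k * (1 / (1 - lambda) + (M%:R + 1 / (1 - lambda)) / lambda ^+ M) =
    lambda ^+ k / (1 - lambda) + M%:R * (lambda ^+ k / lambda ^+ M) +
    lambda ^+ k / lambda ^+ M / (1 - lambda).
  have hM0 : lambda ^+ M != 0 by rewrite gt_eqF ?lambdaX_gt0.
  have hl0 : 1 - lambda != 0 by rewrite gt_eqF.
  move: hM0 hl0; move: (lambda ^+ M) (lambda ^+ k) (1 - lambda) => y z w hy hw.
  by field; rewrite hy hw.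
lra.
Qed.

Lemma shadow_sub_bd_ball Rad : 0 < Rad -> exists C1 : R, 0 < C1 /\
  forall (xi gam : nat -> G) (k : nat),
    is_boundary S lambda xi -> geodesic_to S lambda 1%g xi gam ->
    shadow S lambda 1%g (gam k) Rad `<=` bd_ball S lambda xi (C1 * lambda ^+ d 1%g (gam k)).
Proof.
move=> hR; set M := (Num.Def.truncn Rad).+1.
have hl : 0 < 1 - lambda by rewrite subr_gt0.
set K := 1 / (1 - lambda) + (M%:R + 1 / (1 - lambda)) / lambda ^+ M.
have hi : 0 < 1 / (1 - lambda) by rewrite divr_gt0.
have hK : 0 < K by rewrite /K addr_gt0 // divr_gt0 ?lambdaX_gt0 // addr_gt0 // ltr0n.
exists (2 + K); split; first by rewrite addr_gt0.
move=> xi gam k hxi [g0 [hg hxi_g]] eta [heta [a [[a0 [ha heta_a]] [n hn]]]].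
split => //; rewrite geod_ray_wdist1 //.
have hnM : (d (a n) (gam k) <= M)%N.
  by have := le_lt_trans hn (truncnS_gt Rad); rewrite ltr_nat => /ltnW.
have hr : 0 < lambda ^+ k / 2 by rewrite divr_gt0 ?lambdaX_gt0.
have [N1 HN1] := rho_equiv_lt hxi_g hr.
have [N2 HN2] := rho_equiv_lt heta_a hr.
apply: (@le_lt_trans _ _ (lambda ^+ k + lambda ^+ k * K)); last first.
  by rewrite mulrDl [K * _]mulrC ltrD2r; have := lambdaX_gt0 k; lra.
rewrite /rho_bd /rho1; apply: limn_le_eventually; first exact: cvgn_rho1 (proj1 hxi) (proj1 heta).
exists (maxn (maxn k n) (maxn N1 N2)) => j.
rewrite !geq_max => /andP [/andP [hkj hnj] /andP [hN1 hN2]].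
have t1 := HN1 j hN1; have t2 := HN2 j hN2.
have t3 : rho 1%g (gam j) (a j) <= lambda ^+ k * K := rho1_geod_rays_near g0 hg a0 ha hnM hkj hnj.
have t4 := rho_triangle 1%g (xi j) (gam j) (eta j).
have t5 := rho_triangle 1%g (gam j) (a j) (eta j).
rewrite (rhoC _ (gam j)) in t1.
lra.
Qed.

Definition neighbours (x : G) : seq G :=
  [seq (x * s)%g | s <- S] ++ [seq (x * s^-1)%g | s <- S].

Lemma adj_neighbours x y : adj x y -> y \in neighbours x.
Proof.
case=> s hs [] ->; rewrite mem_cat; apply/orP; first by left; apply: map_f.
by right; rewrite -{1}(mulgK s y); apply: map_f.
Qed.

Fixpoint ball_seq (T : nat) : seq G :=
  if T is T'.+1 then ball_seq T' ++ flatten [seq neighbours x | x <- ball_seq T']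
  else [:: 1%g].

Lemma mem_ball_seq T y : (d 1%g y <= T)%N -> y \in ball_seq T.
Proof.
elim: T y => [|T IH] y hy /=.
  by rewrite -(@wdist_eq0 1%g y) ?mem_head //; apply/eqP; rewrite -leqn0.
have [p [[hp hl] hs]] := exists_geodesic_walk 1%g y.
rewrite mem_cat; move: hp hl hs; case/lastP: p => [|q z] /=.
  by move=> _ <- _; apply/orP; left; apply: IH; rewrite wdistxx.
rewrite walk_rcons last_rcons size_rcons => -[hq hqz] hzy hs; subst y.
apply/orP; right; apply/flatten_mapP; exists (last 1%g q); last exact: adj_neighbours.
apply: IH; apply: leq_trans (wdist_le_size (conj hq (erefl (last 1%g q)))) _.
by rewrite -ltnS hs.
Qed.

Definition cofinal (J : set nat) : Prop := forall N, exists2 j, (N <= j)%N & J j.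

Lemma cofinal_sub (A B : set nat) : A `<=` B -> cofinal A -> cofinal B.
Proof. by move=> hAB hA N; have [j h1 /hAB h2] := hA N; exists j. Qed.

Lemma cofinal_pigeonhole (T : eqType) (l : seq T) (J : set nat) (f : nat -> T) :
  cofinal J -> (forall j, J j -> f j \in l) ->
  exists2 c, c \in l & cofinal [set j | J j /\ f j = c].
Proof.
elim: l J => [|c l IH] J hJ hf; first by have [j _ /hf] := hJ 0%N.
have [Hc|/existsNP [N HN]] := pselect (cofinal [set j | J j /\ f j = c]).
  by exists c => //; rewrite mem_head.
have hJN : cofinal [set j | J j /\ (N <= j)%N].
  move=> M; have [j h1 h2] := hJ (maxn N M).
  by exists j; rewrite ?(leq_trans _ h1) ?leq_maxr //; split; rewrite ?(leq_trans _ h1) ?leq_maxl.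
have hfl j : J j /\ (N <= j)%N -> f j \in l.
  move=> [hj hNj]; have := hf j hj; rewrite inE => /orP [/eqP hc|//].
  by exfalso; apply: HN; exists j.
have [c' hc' hi] := IH _ hJN hfl.
exists c'; first by rewrite inE hc' orbT.
by apply: cofinal_sub hi => j /= [[h1 _] h2].
Qed.

Lemma boundary_wdist_unbounded eta : is_boundary S lambda eta ->
  forall T, exists N, forall j, (N <= j)%N -> (T < d 1%g (eta j))%N.
Proof.
move=> [hc hnot] T; apply: contrapT => hno.
have hJ : cofinal [set j | (d 1%g (eta j) <= T)%N].
  move=> N; apply: contrapT => hN; apply: hno; exists N => j hj.
  by rewrite ltnNge; apply/negP => hj'; apply: hN; exists j.
have [c _ hc'] := cofinal_pigeonhole hJ (fun j => @mem_ball_seq T (eta j)).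
apply: (hnot c); apply/cvgn0P => e /hc [N HN]; exists N => n hn.
by have [j hNj [_ <-]] := hc' N; rewrite ger0_norm ?rho_ge0 // HN.
Qed.

Definition mu := Num.sqrt lambda.

Lemma mu_ge0 : 0 <= mu.
Proof. exact: sqrtr_ge0. Qed.

Lemma mu_lt1 : mu < 1.
Proof. by rewrite /mu -sqrtr1 ltr_sqrt. Qed.

Lemma lambdaX_muX a : lambda ^+ a = mu ^+ (a * 2).
Proof. by rewrite mulnC exprM sqr_sqrtr // ltW. Qed.

Lemma muX_le m n : (n <= m)%N -> mu ^+ m <= mu ^+ n.
Proof. by move=> h; apply: ler_wiXn2l; rewrite ?mu_ge0 ?ltW ?mu_lt1. Qed.

Section Karlsson.
Variable v : G.
Let k := d 1%g v.

(* karlsson_tail t = \sum_(s >= t) mu ^ e(s),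
   where e(s) = s - k for s >= k and k - 1 - s for s < k. *)
Definition karlsson_tail (t : nat) : R := (mu ^+ (t - k) + (1 - mu ^+ (k - t))) / (1 - mu).

Lemma karlsson_tailS t : mu ^+ ((t - k) + (k - t.+1)) + karlsson_tail t.+1 = karlsson_tail t.
Proof.
have hm : 1 - mu != 0 by rewrite subr_eq0 gt_eqF // mu_lt1.
rewrite /karlsson_tail; case: (leqP k t) => h.
  have -> : (k - t.+1 = 0)%N by apply/eqP; rewrite subn_eq0 ltnW // ltnS.
  have -> : (k - t = 0)%N by apply/eqP; rewrite subn_eq0.
  rewrite subSn // addn0 expr0 exprS.
  by move: hm; move: mu (mu ^+ _) => m q hm; field.
have -> : (t - k = 0)%N by apply/eqP; rewrite subn_eq0 (ltnW h).
have -> : (t.+1 - k = 0)%N by apply/eqP; rewrite subn_eq0.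
have -> : (k - t = (k - t.+1).+1)%N by rewrite -subSn.
rewrite add0n expr0 exprS.
by move: hm; move: mu (mu ^+ _) => m q hm; field.
Qed.

Lemma karlsson_tail_ge0 t : 0 <= karlsson_tail t.
Proof.
have h1 : 0 <= mu ^+ (t - k) by rewrite exprn_ge0 ?mu_ge0.
have h2 : mu ^+ (k - t) <= 1 by rewrite exprn_ile1 ?mu_ge0 // ltW // mu_lt1.
by rewrite divr_ge0 ?subr_ge0 ?(ltW mu_lt1) //; lra.
Qed.

Lemma karlsson_tail_le t : karlsson_tail t <= 2 / (1 - mu).
Proof.
rewrite ler_pM2r ?invr_gt0 ?subr_gt0 ?mu_lt1 //.
have h1 : mu ^+ (t - k) <= 1 by rewrite exprn_ile1 ?mu_ge0 // ltW // mu_lt1.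
have h2 : 0 <= mu ^+ (k - t) by rewrite exprn_ge0 ?mu_ge0.
lra.
Qed.

Lemma karlsson_bound M y p : walk y p -> d 1%g (last y p) = (d 1%g y + size p)%N ->
  (forall z, z \in y :: p -> (M <= d v z)%N) ->
  wlen v y p <= mu ^+ M * karlsson_tail (d 1%g y).
Proof.
elim: p y => [|z q IH] y /=.
  by move=> _ _ _; rewrite mulr_ge0 ?exprn_ge0 ?mu_ge0 ?karlsson_tail_ge0.
case=> hyz hq hl hM.
have hz1 : (d 1%g z <= d 1%g y + 1)%N.
  by apply: leq_trans (wdist_triangle _ y _) _; rewrite leq_add2l wdist_adj_le1.
have hq1 : (d 1%g (last z q) <= d 1%g z + size q)%N.
  apply: leq_trans (wdist_triangle _ z _) _.
  by rewrite leq_add2l (wdist_le_size (conj hq (erefl _))).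
have ez : d 1%g z = (d 1%g y).+1 by lia.
have hl' : d 1%g (last z q) = (d 1%g z + size q)%N by lia.
have hIH := IH z hq hl' (fun w hw => hM w ltac:(by rewrite in_cons hw orbT)).
rewrite ez in hIH; rewrite -karlsson_tailS mulrDr; apply: lerD hIH.
rewrite /edge_len -exprD lambdaX_muX; apply: muX_le.
(* 2 min(d(v,y), d(v,z)) >= M + |d(1,y) - d(1,v)| by the triangle inequality *)
have a1 := wdist_triangle 1%g v y; have a2 := wdist_triangle 1%g y v.
have a3 := wdist_triangle 1%g v z; have a4 := wdist_triangle 1%g z v.
rewrite (wdistC y v) in a2; rewrite (wdistC z v) in a4.
have b1 : (M <= d v y)%N by apply: hM; rewrite mem_head.
have b2 : (M <= d v z)%N by apply: hM; rewrite in_cons mem_head orbT.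
rewrite -/k; move: a1 a2 a3 a4 b1 b2 ez; clear; lia.
Qed.

Lemma geodesic_walk_meets_ball M y p : geodesic_walk 1%g y p ->
  mu ^+ M * (2 / (1 - mu)) < rho v 1%g y -> exists2 z, z \in 1%g :: p & (d z v <= M)%N.
Proof.
move=> [hp hs] hrho; apply: contrapT => hno.
have hfar z : z \in 1%g :: p -> (M <= d v z)%N.
  move=> hz; rewrite wdistC leqNgt; apply/negP => hzM; apply: hno.
  by exists z => //; apply: ltnW.
have hl : d 1%g (last 1%g p) = (d 1%g 1%g + size p)%N by rewrite (proj2 hp) wdistxx hs.
have := karlsson_bound (proj1 hp) hl hfar.
have := rho_le_walk_len v hp.
have : mu ^+ M * karlsson_tail (d 1%g 1%g) <= mu ^+ M * (2 / (1 - mu)).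
  by rewrite ler_wpM2l ?exprn_ge0 ?mu_ge0 ?karlsson_tail_le.
lra.
Qed.

End Karlsson.

Lemma chain_wdist_le (h : nat -> G) L : (forall t, (t < L)%N -> adj (h t) (h t.+1)) ->
  forall s n, (s + n <= L)%N -> (d (h s) (h (s + n)%N) <= n)%N.
Proof.
move=> hadj s; elim=> [|n IH] hn; first by rewrite addn0 wdistxx.
have hsn : (s + n < L)%N by rewrite -addnS.
apply: leq_trans (wdist_triangle _ (h (s + n)%N) _) _.
have := IH (ltnW hsn); have := wdist_adj_le1 (hadj _ hsn).
by rewrite addnS; lia.
Qed.

Lemma chain_wdist (h : nat -> G) L : (forall t, (t < L)%N -> adj (h t) (h t.+1)) ->
  d (h 0%N) (h L) = L -> forall s t, (s <= t)%N -> (t <= L)%N -> d (h s) (h t) = (t - s)%N.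
Proof.
move=> hadj hL s t hst htL.
have e1 := @chain_wdist_le h L hadj 0 s ltac:(lia).
have e2 := @chain_wdist_le h L hadj s (t - s) ltac:(lia).
have e3 := @chain_wdist_le h L hadj t (L - t) ltac:(lia).
rewrite add0n in e1; rewrite subnKC // in e2; rewrite subnKC // in e3.
have t1 := wdist_triangle (h 0%N) (h s) (h L).
have t2 := wdist_triangle (h s) (h t) (h L).
lia.
Qed.

Lemma geodesic_walk_nth_wdist x y p : geodesic_walk x y p ->
  forall s t, (s <= t)%N -> (t <= size p)%N -> d (nth x (x :: p) s) (nth x (x :: p) t) = (t - s)%N.
Proof.
move=> [[hp hl] hs]; apply: chain_wdist => [t|]; first exact: walk_nth_adj.
by rewrite -last_nth hl hs.
Qed.

Lemma rho_pt_far_eventually v xi eta kappa : 0 < kappa ->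
  is_boundary S lambda xi -> is_boundary S lambda eta ->
  kappa <= rho_pt_bd S lambda v 1%g xi ->
  rho_bd S lambda xi eta < kappa / 4 * lambda ^+ d 1%g v ->
  exists N, forall j, (N <= j)%N -> kappa / 2 < rho v 1%g (eta j).
Proof.
move=> hk [hxi _] [heta _]; rewrite /rho_pt_bd /rho_bd /rho1 => hfar hclose.
have [N1 HN1] := limn_lt_eventually (cvgn_rho1 hxi heta) hclose.
have h34 : 3 * kappa / 4 < limn (fun n => rho v 1%g (xi n)) by apply: lt_le_trans hfar; lra.
have [N2 HN2] := limn_gt_eventually (cvgn_rho_pt hxi) h34.
exists (maxn N1 N2) => j; rewrite geq_max => /andP [/HN1 h1 /HN2 h2].
have h3 : rho v (xi j) (eta j) < kappa / 4.
  by apply: le_lt_trans (rho_le_rho1 _ _ _) _; rewrite ltr_pdivrMr ?lambdaX_gt0.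
have := rho_triangle v 1%g (eta j) (xi j); rewrite (rhoC v (eta j)); lra.
Qed.

Section LimitRay.
Variable eta : nat -> G.
Hypothesis eta_bd : is_boundary S lambda eta.

Definition geodesic_walk_to (j : nat) : seq G :=
  xget [::] [set p | geodesic_walk 1%g (eta j) p].

Lemma geodesic_walk_toP j : geodesic_walk 1%g (eta j) (geodesic_walk_to j).
Proof. exact: (xgetPex [::] (exists_geodesic_walk 1%g (eta j))). Qed.

Definition gvertex (j t : nat) : G := nth 1%g (1%g :: geodesic_walk_to j) t.

Lemma gvertex_adj j t : (t < size (geodesic_walk_to j))%N -> adj (gvertex j t) (gvertex j t.+1).
Proof. exact: walk_nth_adj (proj1 (proj1 (geodesic_walk_toP j))). Qed.

Lemma gvertex_wdist j s t : (s <= t)%N -> (t <= size (geodesic_walk_to j))%N ->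
  d (gvertex j s) (gvertex j t) = (t - s)%N.
Proof. exact: (@geodesic_walk_nth_wdist _ _ _ (geodesic_walk_toP j) s t). Qed.

Lemma rho1_gvertex_tail j t : (t <= size (geodesic_walk_to j))%N ->
  rho 1%g (gvertex j t) (eta j) <= lambda ^+ t / (1 - lambda).
Proof.
move=> ht; have [[_ hl] _] := geodesic_walk_toP j.
have -> : eta j = gvertex j (size (geodesic_walk_to j)) by rewrite /gvertex -last_nth hl.
apply: (@rho1_geodesic_segment (gvertex j) _ _ _ t _ ht (leqnn _)) => [s hs|s hs].
  by have := @gvertex_wdist j 0 s (leq0n s) hs; rewrite subn0.
exact: gvertex_adj hs.
Qed.

Variable J0 : nat.

(* Koenig's lemma: the indices j >= J0 whose geodesics to eta j follow the ray
   up to time t form an infinite set; since vertices have finitely many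
   neighbours, one more vertex can be fixed while keeping it infinite. *)
Definition next_vertex (J : set nat) (t : nat) : G :=
  xget 1%g [set c | cofinal [set j | J j /\ gvertex j t.+1 = c]].

Fixpoint agreeing (t : nat) : set nat :=
  if t is t'.+1 then [set j | agreeing t' j /\ gvertex j t = next_vertex (agreeing t') t']
  else [set j | (J0 <= j)%N].

Definition limit_ray (t : nat) : G := if t is t'.+1 then next_vertex (agreeing t') t' else 1%g.

Lemma agreeingP t : cofinal (agreeing t) /\
  forall j, agreeing t j -> (J0 <= j)%N /\ forall s, (s <= t)%N -> gvertex j s = limit_ray s.
Proof.
elim: t => [|t [IHi IHa]].
  split; first by move=> N; exists (maxn N J0); rewrite ?leq_maxl //= leq_maxr.
  by move=> j hj; split => // s; rewrite leqn0 => /eqP ->.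
have hex : exists c, cofinal [set j | agreeing t j /\ gvertex j t.+1 = c].
  have hI : cofinal [set j | agreeing t j /\ (t < size (geodesic_walk_to j))%N].
    move=> N; have [N' HN'] := boundary_wdist_unbounded eta_bd t.
    have [j h1 h2] := IHi (maxn N N'); exists j; first by apply: leq_trans h1; rewrite leq_maxl.
    split => //; rewrite (proj2 (geodesic_walk_toP j)); apply: HN'.
    by apply: leq_trans h1; rewrite leq_maxr.
  have hf j : agreeing t j /\ (t < size (geodesic_walk_to j))%N ->
      gvertex j t.+1 \in neighbours (limit_ray t).
    move=> [h1 h2]; rewrite -(proj2 (IHa j h1) t (leqnn t)).
    exact: adj_neighbours (gvertex_adj h2).
  have [c _ hc] := cofinal_pigeonhole hI hf; exists c.
  by apply: cofinal_sub hc => j /= [[h1 _] h2].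
split; first exact: (xgetPex 1%g hex).
move=> j /= [hj hjt]; have [hJ ha] := IHa j hj; split => // s.
by rewrite leq_eqVlt => /orP [/eqP -> //|]; rewrite ltnS; exact: ha.
Qed.

Lemma limit_ray_agree t N : exists j, [/\ (N <= j)%N, (t <= size (geodesic_walk_to j))%N,
  (J0 <= j)%N & forall s, (s <= t)%N -> gvertex j s = limit_ray s].
Proof.
have [N' HN'] := boundary_wdist_unbounded eta_bd t.
have [j h1 h2] := (proj1 (agreeingP t)) (maxn N N').
have [h3 h4] := (proj2 (agreeingP t)) j h2.
exists j; split => //; first by apply: leq_trans h1; rewrite leq_maxl.
rewrite (proj2 (geodesic_walk_toP j)); apply: ltnW; apply: HN'.
by apply: leq_trans h1; rewrite leq_maxr.
Qed.

Lemma limit_ray_geodesic : geodesic_to S lambda 1%g eta limit_ray.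
Proof.
split => //; split.
  move=> a b; have [j [_ hsz _ hag]] := limit_ray_agree (maxn a b) 0.
  rewrite -(hag a (leq_maxl _ _)) -(hag b (leq_maxr _ _)).
  have ha : (a <= size (geodesic_walk_to j))%N by apply: leq_trans hsz; rewrite leq_maxl.
  have hb : (b <= size (geodesic_walk_to j))%N by apply: leq_trans hsz; rewrite leq_maxr.
  case: (leqP a b) => hab; first by rewrite gvertex_wdist //; move: hab; clear; lia.
  by rewrite wdistC gvertex_wdist ?(ltnW hab) //; move: hab; clear; lia.
apply/cvgn0P => e e0.
have e2 : 0 < e / 2 by rewrite divr_gt0.
have [N1 HN1] := proj1 eta_bd _ e2.
have hl : 0 < 1 - lambda by rewrite subr_gt0.
have [N2 HN2] := exprn_lt_eventually (ltW lambda_gt0) lambda_lt1 (mulr_gt0 e2 hl).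
exists (maxn N1 N2) => n; rewrite geq_max => /andP [hn1 hn2].
have [j [hj hsz _ hag]] := limit_ray_agree n N1.
rewrite ger0_norm ?rho_ge0 // /rho1 -(hag n (leqnn n)).
have t1 := rho_triangle 1%g (gvertex j n) (eta j) (eta n).
have t2 := rho1_gvertex_tail hsz.
have t3 := HN1 j n hj hn1; rewrite /rho1 in t3.
have t4 : lambda ^+ n / (1 - lambda) < e / 2 by rewrite ltr_pdivrMr // HN2.
lra.
Qed.

End LimitRay.

Lemma bd_ball_sub_shadow kappa : 0 < kappa -> exists Rad C2 : R, 0 < Rad /\ 0 < C2 /\
  forall (xi gam : nat -> G) (k : nat),
    is_boundary S lambda xi -> geodesic_to S lambda 1%g xi gam ->
    kappa <= rho_pt_bd S lambda (gam k) 1%g xi ->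
    bd_ball S lambda xi (C2 * lambda ^+ d 1%g (gam k)) `<=` shadow S lambda 1%g (gam k) Rad.
Proof.
move=> hk; have hmu : 0 < 1 - mu by rewrite subr_gt0 mu_lt1.
have he : 0 < kappa * (1 - mu) / 4 by rewrite divr_gt0 // mulr_gt0.
have [M0 HM0] := exprn_lt_eventually mu_ge0 mu_lt1 he.
set M := M0.+1; have hmuM := HM0 M (leqnSn _).
have hfar : mu ^+ M * (2 / (1 - mu)) < kappa / 2.
  rewrite mulrA ltr_pdivrMr //.
  have -> : kappa / 2 * (1 - mu) = kappa * (1 - mu) / 4 * 2 by field.
  by rewrite ltr_pM2r.
exists M%:R, (kappa / 4); split; first by rewrite ltr0n.
split; first by rewrite divr_gt0.
move=> xi gam k hxi [g0 [hg _]] hkap eta [heta hball].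
have [J0 HJ0] := rho_pt_far_eventually hk hxi heta hkap hball.
split => //; exists (limit_ray eta J0); split; first exact: limit_ray_geodesic.
have [j [_ hsz hJ hag]] := limit_ray_agree heta J0 (d 1%g (gam k) + M) 0.
have [z hz hzv] := geodesic_walk_meets_ball (geodesic_walk_toP eta j) (lt_trans hfar (HJ0 j hJ)).
set t := index z (1%g :: geodesic_walk_to eta j).
have ht : (t <= size (geodesic_walk_to eta j))%N by have := hz; rewrite -index_mem.
have hzt : gvertex eta j t = z := nth_index 1%g hz.
have hdt : d 1%g z = t.
  by rewrite -hzt; have := @gvertex_wdist eta j 0 t (leq0n t) ht; rewrite subn0.
have htM : (t <= d 1%g (gam k) + M)%N.
  by rewrite -hdt; apply: leq_trans (wdist_triangle _ (gam k) _) _; rewrite leq_add2l wdistC.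
by exists t; rewrite -(hag t htM) hzt ler_nat.
Qed.

End Floyd.

Theorem lemma8p12 (G : groupType) (S : seq G) (R : realType) (lambda : R) :
  generates S -> 0 < lambda -> lambda < 1 ->
  (forall Rad : R, 0 < Rad -> exists C1 : R, 0 < C1 /\
     forall (xi gam : nat -> G) (k : nat),
       is_boundary S lambda xi -> geodesic_to S lambda 1%g xi gam ->
       shadow S lambda 1%g (gam k) Rad `<=`
         bd_ball S lambda xi (C1 * lambda ^+ wdist S 1%g (gam k)))
  /\
  (forall kappa : R, 0 < kappa -> exists Rad C2 : R, 0 < Rad /\ 0 < C2 /\
     forall (xi gam : nat -> G) (k : nat),
       is_boundary S lambda xi -> geodesic_to S lambda 1%g xi gam ->
       kappa <= rho_pt_bd S lambda (gam k) 1%g xi ->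
       bd_ball S lambda xi (C2 * lambda ^+ wdist S 1%g (gam k)) `<=`
         shadow S lambda 1%g (gam k) Rad).
Proof.
move=> S_gen lambda_gt0 lambda_lt1; split.
  exact: (shadow_sub_bd_ball S_gen lambda_gt0 lambda_lt1).
exact: (bd_ball_sub_shadow S_gen lambda_gt0 lambda_lt1).
Qed.
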